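(* Let $\mathcal X$ be a proper CAT(0) cube complex on which $G$ acts properly and cocompactly. Let $Y_1,Y_2$ be convex subcomplexes of $\mathcal X$ and let $G_i=\mathrm{Stab}_G(Y_i)$, and suppose $G_i$ acts cocompactly on $Y_i$ for $i=1,2$. Then $G_1$ and $G_2$ are commensurable if and only if the $G_1$-essential core $\widehat{Y_1}$ and the $G_2$-essential core $\widehat{Y_2}$ are parallel.
   Context: Two convex subcomplexes are parallel if exactly the same hyperplanes intersect them. A hyperplane $H$ crossing a convex subcomplex $F$ is $G'$-essential (for $G'$ preserving $F$) if for any $0$-cube $x\in F$, each halfspace of $H$ contains points of $G'x$ arbitrarily far from $H$; $G'$ acts essentially on $F$ if every hyperplane crossing $F$ is $G'$-essential. If $G'$ acts cocompactly on $F$, the $G'$-essential core $\widehat F_{G'}$ is a $G'$-invariant convex subcomplex of $F$ at finite Hausdorff distance from $F$, crossed exactly by the hyperplanes essential in $F$, on which $G'$ acts essentially and cocompactly (Caprace–Sageev); it is well defined up to parallelism. Subgroups are commensurable if their intersection has finite index in each. *)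

(* CAT(0) cube complexes are modelled combinatorially through
   their 1-skeleta, i.e. median graphs (Chepoi/Roller); hyperplanes through
   Djokovic-Winkler classes of edges; halfspaces as the two sides of an edge. *)
From Stdlib Require Import Arith List Classical.
Set Implicit Arguments.

Section Graph.
Variable V : Type.
Variable adj : V -> V -> Prop.

Inductive Walk : V -> V -> nat -> Prop :=
| walk0 x : Walk x x 0
| walkS x y z n : adj x y -> Walk y z n -> Walk x z (S n).

Definition dist (x y : V) (n : nat) : Prop :=
  Walk x y n /\ forall m, Walk x y m -> n <= m.

Definition in_interval (x y z : V) : Prop :=
  exists a b c, dist x z a /\ dist z y b /\ dist x y c /\ a + b = c.

Definition median_graph : Prop :=
  (forall x y, adj x y -> adj y x) /\
  (forall x, ~ adj x x) /\
  (forall x y, exists n, Walk x y n) /\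
  (forall x y z, exists m,
      (in_interval x y m /\ in_interval y z m /\ in_interval x z m) /\
      forall m', in_interval x y m' /\ in_interval y z m' /\ in_interval x z m' -> m' = m).

Definition locally_finite : Prop :=
  forall x, exists l : list V, forall y, adj x y -> In y l.

Definition proper_CAT0_cube_complex : Prop := median_graph /\ locally_finite.

(* convex subcomplexes = (nonempty) convex vertex sets; the subcomplex is the
   full subcomplex spanned by them *)
Definition convex_subcomplex (Y : V -> Prop) : Prop :=
  (exists y, Y y) /\ forall x y z, Y x -> Y y -> in_interval x y z -> Y z.

(* Djokovic-Winkler relation: edge ab and edge cd are dual to the same
   hyperplane *)
Definition theta (a b c d : V) : Prop :=
  exists ac bd ad bc, dist a c ac /\ dist b d bd /\ dist a d ad /\ dist b c bc /\
    ac + bd <> ad + bc.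

Definition crosses (a b : V) (Y : V -> Prop) : Prop :=
  exists c d, Y c /\ Y d /\ adj c d /\ theta a b c d.

Definition parallel (Y Z : V -> Prop) : Prop :=
  forall a b, adj a b -> (crosses a b Y <-> crosses a b Z).

(* the halfspace of the hyperplane dual to (a,b) containing a *)
Definition halfspace (a b x : V) : Prop :=
  exists m n, dist x a m /\ dist x b n /\ m < n.

Definition far_from (a b : V) (n : nat) (y : V) : Prop :=
  forall z k, halfspace b a z -> dist y z k -> n <= k.

Definition finite_hausdorff (Y Z : V -> Prop) : Prop :=
  exists R, (forall y, Y y -> exists z k, Z z /\ dist y z k /\ k <= R) /\
            (forall z, Z z -> exists y k, Y y /\ dist z y k /\ k <= R).
End Graph.

Section Groups.
Variable G : Type.
Variable mul : G -> G -> G.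
Variable inv : G -> G.
Variable e : G.

Definition is_group : Prop :=
  (forall x y z, mul x (mul y z) = mul (mul x y) z) /\
  (forall x, mul e x = x) /\ (forall x, mul x e = x) /\
  (forall x, mul (inv x) x = e) /\ (forall x, mul x (inv x) = e).

Definition finite_index (H K : G -> Prop) : Prop :=
  exists l : list G, forall k, K k -> exists s h, In s l /\ H h /\ k = mul s h.

Definition commensurable (H K : G -> Prop) : Prop :=
  finite_index (fun g => H g /\ K g) H /\ finite_index (fun g => H g /\ K g) K.

Variable V : Type.
Variable adj : V -> V -> Prop.
Variable act : G -> V -> V.

Definition is_graph_action : Prop :=
  (forall v, act e v = v) /\
  (forall g h v, act (mul g h) v = act g (act h v)) /\
  (forall g x y, adj x y <-> adj (act g x) (act g y)).

(* proper action on a locally finite complex: finite vertex stabilisers *)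
Definition acts_properly : Prop :=
  forall v, exists l : list G, forall g, act g v = v -> In g l.

(* cocompact action of the subgroup G' on F: finitely many vertex orbits *)
Definition acts_cocompactly_on (G' : G -> Prop) (F : V -> Prop) : Prop :=
  exists l : list V, forall v, F v -> exists w g, In w l /\ G' g /\ v = act g w.

Definition stab (Y : V -> Prop) (g : G) : Prop :=
  forall v, Y v <-> Y (act g v).

Definition invariant (G' : G -> Prop) (Y : V -> Prop) : Prop :=
  forall g v, G' g -> Y v -> Y (act g v).

Definition essential (G' : G -> Prop) (F : V -> Prop) (a b : V) : Prop :=
  forall x, F x -> forall n,
    (exists g, G' g /\ halfspace adj a b (act g x) /\ far_from adj a b n (act g x)) /\
    (exists g, G' g /\ halfspace adj b a (act g x) /\ far_from adj b a n (act g x)).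

Definition acts_essentially (G' : G -> Prop) (F : V -> Prop) : Prop :=
  forall a b, adj a b -> crosses adj a b F -> essential G' F a b.

Definition essential_core (G' : G -> Prop) (F C : V -> Prop) : Prop :=
  convex_subcomplex adj C /\
  (forall v, C v -> F v) /\
  invariant G' C /\
  finite_hausdorff adj C F /\
  (forall a b, adj a b ->
     (crosses adj a b C <-> (crosses adj a b F /\ essential G' F a b))) /\
  acts_essentially G' C /\
  acts_cocompactly_on G' C.
End Groups.

(* If [Stab Y1 ∩ Stab Y2] has finite index in [Stab Y1], every [Stab Y1]-orbit stays
   within bounded distance of a [Stab Y2]-orbit, so a hyperplane whose both halfspaces
   contain points of a [Stab Y1]-orbit arbitrarily deep is [Stab Y2]-essential as well;
   being essential it crosses [Y2], hence the core of [Y2].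

   Conversely, parallel convex subcomplexes are at finite Hausdorff distance: walking
   along a geodesic inside one of them, each edge is dual to a hyperplane crossing the
   other, and convexity of halfspaces lets the nearest point follow.  So [Y1] lies in a
   bounded neighbourhood of [Y2].  Writing the points of [Y2] as [h f] with [h] in
   [Stab Y2] and [f] among finitely many orbit representatives, local finiteness and
   properness show that [Stab Y1] is covered by finitely many cosets of [Stab Y2]. *)

From Stdlib Require Import Arith List Classical ClassicalEpsilon Lia.

Set Implicit Arguments.
Unset Strict Implicit.

Lemma finite_union (A B : Type) (P : A -> B -> Prop) :
  (forall a, exists l, forall b, P a b -> In b l) ->
  forall L, exists l, forall a b, In a L -> P a b -> In b l.
Proof.
  intros HP L. induction L as [|a0 L [l Hl]].
  - exists nil. intros a b [].
  - destruct (HP a0) as [l0 Hl0]. exists (l0 ++ l).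
    intros a b [<-|Ha] Hab; apply in_or_app; eauto.
Qed.

Lemma finite_choice (A B : Type) (P : A -> B -> Prop) (L : list A) :
  exists l, forall a, In a L -> (exists b, P a b) -> exists b, In b l /\ P a b.
Proof.
  induction L as [|a0 L [l Hl]].
  - exists nil. intros a [].
  - destruct (classic (exists b, P a0 b)) as [[b0 Hb0]|Hnone].
    + exists (b0 :: l). intros a [<-|Ha] Hex.
      * exists b0. split; [left|]; auto.
      * destruct (Hl a Ha Hex) as [b [Hb Pb]]. exists b. split; [right|]; auto.
    + exists l. intros a [<-|Ha] Hex; [contradiction|auto].
Qed.

Lemma finite_max_bound (A : Type) (f : A -> nat) (l : list A) :
  exists M, forall a, In a l -> f a <= M.
Proof.
  induction l as [|a0 l [M HM]].
  - exists 0. intros a [].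
  - exists (f a0 + M). intros a [<-|Ha]; [lia|]. specialize (HM a Ha). lia.
Qed.

Section Geometry.
Variable V : Type.
Variable adj : V -> V -> Prop.
Hypothesis adj_sym : forall x y, adj x y -> adj y x.
Hypothesis adj_irrefl : forall x, ~ adj x x.
Hypothesis connected : forall x y, exists n, Walk adj x y n.

Lemma walk_app x y z m n : Walk adj x y m -> Walk adj y z n -> Walk adj x z (m + n).
Proof. induction 1; intros; simpl; [|econstructor]; eauto. Qed.

Lemma walk_rev x y n : Walk adj x y n -> Walk adj y x n.
Proof.
  induction 1 as [|x y z n Hxy _ IH]; [constructor|].
  rewrite <- Nat.add_1_r. apply walk_app with y; auto.
  apply walkS with x; auto. constructor.
Qed.

Lemma dist_exists x y : exists n, dist adj x y n.
Proof.
  destruct (dec_inh_nat_subset_has_unique_least_element (Walk adj x y))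
    as [n [[Hn Hmin] _]]; auto using classic.
  exists n. split; auto.
Qed.

(* In a connected graph [dist adj x y] has exactly one solution, which [epsilon] picks. *)
Definition gdist (x y : V) : nat := epsilon (inhabits 0) (dist adj x y).

Lemma gdist_spec x y : dist adj x y (gdist x y).
Proof. exact (epsilon_spec _ _ (dist_exists x y)). Qed.

Lemma dist_gdist x y n : dist adj x y n -> gdist x y = n.
Proof.
  intros [Hw Hmin]. destruct (gdist_spec x y) as [Hw' Hmin'].
  specialize (Hmin _ Hw'). specialize (Hmin' _ Hw). lia.
Qed.

Lemma gdist_le_walk x y n : Walk adj x y n -> gdist x y <= n.
Proof. apply gdist_spec. Qed.

Lemma gdist_refl x : gdist x x = 0.
Proof. pose proof (gdist_le_walk (walk0 adj x)). lia. Qed.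

Lemma gdist_eq0 x y : gdist x y = 0 -> x = y.
Proof.
  intros H. destruct (gdist_spec x y) as [Hw _]. rewrite H in Hw.
  now inversion Hw.
Qed.

Lemma gdist_sym x y : gdist x y = gdist y x.
Proof. apply Nat.le_antisymm; apply gdist_le_walk, walk_rev, gdist_spec. Qed.

Lemma gdist_triangle x y z : gdist x z <= gdist x y + gdist y z.
Proof. apply gdist_le_walk. apply walk_app with y; apply gdist_spec. Qed.

Lemma gdist_adj x y : adj x y -> gdist x y = 1.
Proof.
  intros Hxy.
  assert (gdist x y <= 1) by (apply gdist_le_walk, walkS with y; auto; constructor).
  assert (gdist x y <> 0) by (intros E; apply gdist_eq0 in E; subst; eapply adj_irrefl; eauto).
  lia.
Qed.

Lemma gdist_step x z n : gdist x z = S n -> exists x', adj x x' /\ gdist x' z = n.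
Proof.
  intros E. destruct (gdist_spec x z) as [Hw _]. rewrite E in Hw.
  inversion Hw as [|? x' ? ? Hxx' Hw']; subst.
  exists x'. split; auto.
  pose proof (gdist_le_walk Hw'). pose proof (gdist_triangle x x' z).
  rewrite (gdist_adj Hxx') in *. lia.
Qed.

Lemma gdist_step_between x y z : x <> z -> gdist x z + gdist z y = gdist x y ->
  exists x', adj x x' /\ S (gdist x' z) = gdist x z /\ S (gdist x' y) = gdist x y.
Proof.
  intros Hxz Hz. destruct (gdist x z) as [|n] eqn:E.
  { apply gdist_eq0 in E. contradiction. }
  destruct (gdist_step E) as [x' [Hxx' Hx'z]].
  exists x'. repeat split; auto.
  pose proof (gdist_triangle x' z y). pose proof (gdist_triangle x x' y).
  rewrite (gdist_adj Hxx') in *. lia.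
Qed.

Lemma in_interval_gdist x y z :
  in_interval adj x y z <-> gdist x z + gdist z y = gdist x y.
Proof.
  split.
  - intros (a & b & c & Ha & Hb & Hc & E).
    apply dist_gdist in Ha, Hb, Hc. lia.
  - intros E. exists (gdist x z), (gdist z y), (gdist x y).
    repeat split; auto; apply gdist_spec.
Qed.

Lemma theta_gdist a b c d :
  theta adj a b c d <-> gdist a c + gdist b d <> gdist a d + gdist b c.
Proof.
  split.
  - intros (ac & bd & ad & bc & Hac & Hbd & Had & Hbc & E).
    apply dist_gdist in Hac, Hbd, Had, Hbc. lia.
  - intros E. exists (gdist a c), (gdist b d), (gdist a d), (gdist b c).
    repeat split; auto; apply gdist_spec.
Qed.

Lemma halfspace_gdist a b x : halfspace adj a b x <-> gdist x a < gdist x b.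
Proof.
  split.
  - intros (m & n & Hm & Hn & E). apply dist_gdist in Hm, Hn. lia.
  - intros E. exists (gdist x a), (gdist x b). repeat split; auto; apply gdist_spec.
Qed.

Lemma far_from_gdist a b n y :
  far_from adj a b n y <-> forall z, gdist z b < gdist z a -> n <= gdist y z.
Proof.
  split.
  - intros H z Hz. apply (H z); [apply halfspace_gdist; auto | apply gdist_spec].
  - intros H z k Hz Hk. apply dist_gdist in Hk. subst.
    apply H, halfspace_gdist; auto.
Qed.

Lemma convex_between Y x y z : convex_subcomplex adj Y -> Y x -> Y y ->
  gdist x z + gdist z y = gdist x y -> Y z.
Proof. intros [_ HY] Hx Hy Hz. apply (HY x y z); auto. apply in_interval_gdist; auto. Qed.

Lemma theta_of_sides a b c d :
  gdist c a < gdist c b -> gdist d b < gdist d a -> theta adj a b c d.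
Proof.
  intros Hc Hd. apply theta_gdist.
  rewrite (gdist_sym a c), (gdist_sym b d), (gdist_sym a d), (gdist_sym b c). lia.
Qed.

Lemma crosses_own_edge Y a b : adj a b -> Y a -> Y b -> crosses adj a b Y.
Proof.
  intros Hab Ha Hb. exists a, b. repeat split; auto.
  apply theta_of_sides; rewrite gdist_refl, gdist_adj; auto.
Qed.

Definition within (R : nat) (Y Z : V -> Prop) : Prop :=
  forall y, Y y -> exists z, Z z /\ gdist y z <= R.

Lemma within_trans R S Y Z W : within R Y Z -> within S Z W -> within (R + S) Y W.
Proof.
  intros HYZ HZW y Hy. destruct (HYZ y Hy) as [z [Hz Hyz]].
  destruct (HZW z Hz) as [w [Hw Hzw]]. exists w. split; auto.
  pose proof (gdist_triangle y z w). lia.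
Qed.

Lemma finite_hausdorff_within Y Z :
  finite_hausdorff adj Y Z -> exists R, within R Y Z /\ within R Z Y.
Proof.
  intros [R [HYZ HZY]]. exists R. split.
  - intros y Hy. destruct (HYZ y Hy) as (z & k & Hz & Hk & HkR).
    apply dist_gdist in Hk. subst. eauto.
  - intros z Hz. destruct (HZY z Hz) as (y & k & Hy & Hk & HkR).
    apply dist_gdist in Hk. subst. eauto.
Qed.

Lemma ball_finite : locally_finite adj ->
  forall c r, exists l, forall v, gdist c v <= r -> In v l.
Proof.
  intros Hlf c r. induction r as [|r [l Hl]].
  - exists (c :: nil). intros v Hv. left. apply gdist_eq0. lia.
  - destruct (finite_union (P := adj) Hlf l) as [L HL].
    exists (l ++ L). intros v Hv. apply in_or_app.
    destruct (Nat.le_gt_cases (gdist c v) r) as [Hle|Hgt]; [left; auto|right].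
    assert (E : gdist v c = S r) by (rewrite gdist_sym; lia).
    destruct (gdist_step E) as [v' [Hvv' Hv'c]].
    apply HL with v'; auto. apply Hl. rewrite gdist_sym. lia.
Qed.

Lemma parallel_sym Y Z : parallel adj Y Z -> parallel adj Z Y.
Proof. intros Hpar a b Hab. symmetry. auto. Qed.

Lemma far_from_shift a b n M u v :
  far_from adj a b (n + M) u -> gdist v u <= M -> far_from adj a b n v.
Proof.
  rewrite !far_from_gdist. intros Hu Hvu z Hz. specialize (Hu z Hz).
  pose proof (gdist_triangle u v z). rewrite (gdist_sym u v) in *. lia.
Qed.

Section Median.
Hypothesis median : forall x y z, exists m,
  (in_interval adj x y m /\ in_interval adj y z m /\ in_interval adj x z m) /\
  forall m', in_interval adj x y m' /\ in_interval adj y z m' /\ in_interval adj x z m' ->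
             m' = m.

Definition is_median (x y z m : V) : Prop :=
  gdist x m + gdist m y = gdist x y /\ gdist y m + gdist m z = gdist y z /\
  gdist x m + gdist m z = gdist x z.

Lemma median_exists x y z : exists m, is_median x y z m.
Proof.
  destruct (median x y z) as [m [Hm _]]. exists m.
  unfold is_median. rewrite <- !in_interval_gdist. exact Hm.
Qed.

Lemma median_unique x y z m m' : is_median x y z m -> is_median x y z m' -> m = m'.
Proof.
  destruct (median x y z) as [c [_ Hc]]. unfold is_median. rewrite <- !in_interval_gdist.
  intros Hm Hm'. rewrite (Hc _ Hm), (Hc _ Hm'). reflexivity.
Qed.

Lemma gdist_edge a b x : adj a b -> gdist x b = S (gdist x a) \/ gdist x a = S (gdist x b).
Proof.
  intros Hab. destruct (median_exists x a b) as [m (Hxa & Hab' & Hxb)].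
  pose proof (gdist_adj Hab). pose proof (gdist_adj (adj_sym Hab)).
  assert (gdist a m = 0 \/ gdist m b = 0) as [E|E] by lia;
    apply gdist_eq0 in E; subst m; rewrite gdist_refl in *; lia.
Qed.

Lemma far_from_halfspace a b n v : adj a b -> far_from adj a b (S n) v -> halfspace adj a b v.
Proof.
  rewrite far_from_gdist, halfspace_gdist. intros Hab Hv.
  destruct (gdist_edge v Hab) as [|Hb]; [lia|].
  specialize (Hv v). rewrite gdist_refl in Hv. lia.
Qed.

Lemma median_edge a b x y m : adj a b ->
  gdist x a < gdist x b -> gdist y a < gdist y b -> is_median x y a m ->
  is_median x y b m /\ gdist m a < gdist m b.
Proof.
  intros Hab Hx Hy (Hxy & Hya & Hxa).
  pose proof (gdist_edge x Hab). pose proof (gdist_edge y Hab).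
  pose proof (gdist_triangle x m b). pose proof (gdist_triangle y m b).
  pose proof (gdist_triangle m a b). rewrite (gdist_adj Hab) in *.
  unfold is_median. lia.
Qed.

Lemma median_of_square a b x y x' y' w : adj a b -> adj x x' -> adj y y' ->
  gdist x a < gdist x b -> gdist y a < gdist y b ->
  gdist x' b < gdist x' a -> gdist y' b < gdist y' a ->
  gdist x y = S (S (gdist x' y')) -> is_median x' y' b w -> is_median x y b w.
Proof.
  intros Hab Hxx' Hyy' Hx Hy Hx' Hy' Exy (Hw & Hy'w & Hx'w).
  pose proof (gdist_edge x Hab). pose proof (gdist_edge y Hab).
  pose proof (gdist_edge x' Hab). pose proof (gdist_edge y' Hab).
  pose proof (gdist_triangle x' x a). pose proof (gdist_triangle x x' b).
  pose proof (gdist_triangle y' y a). pose proof (gdist_triangle y y' b).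
  pose proof (gdist_triangle x x' w). pose proof (gdist_triangle y y' w).
  pose proof (gdist_triangle x w y). pose proof (gdist_triangle x w b).
  pose proof (gdist_triangle y w b).
  rewrite (gdist_sym x' x), (gdist_sym y' y), (gdist_sym w y), (gdist_sym w y') in *.
  rewrite (gdist_adj Hxx'), (gdist_adj Hyy') in *.
  unfold is_median. rewrite (gdist_sym w y). lia.
Qed.

(* Were some [z] between [x] and [y] on the far side, the first steps [x'], [y'] of
   geodesics from [x] and [y] inwards would lie on the far side, and the median of
   [x], [y], [a], which is also the median of [x], [y], [b] and of [x'], [y'], [b],
   would be a point between [x'] and [y'] on the near side, contradicting induction. *)
Lemma halfspace_convex n : forall a b x y z, adj a b -> gdist x y = n ->
  gdist x a < gdist x b -> gdist y a < gdist y b ->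
  gdist x z + gdist z y = gdist x y -> gdist z a < gdist z b.
Proof.
  induction n as [n IH] using lt_wf_ind.
  intros a b x y z Hab En Hx Hy Hz.
  destruct (gdist_edge z Hab) as [|Hzb]; [lia|exfalso].
  assert (Hxz : x <> z) by (intros <-; lia).
  destruct (gdist_step_between Hxz Hz) as (x' & Hxx' & Hx'z & Hx'y).
  assert (Hx' : gdist x' b < gdist x' a).
  { destruct (gdist_edge x' Hab) as [Hx'a|]; [exfalso|lia].
    assert (gdist z a < gdist z b); [|lia].
    apply (IH (gdist x' y)) with (a := a) (b := b) (x := x') (y := y); auto; lia. }
  pose proof (gdist_adj Hxx'). pose proof (gdist_sym y x'). pose proof (gdist_sym y x).
  assert (Hyx' : gdist y x' + gdist x' x = gdist y x) by (rewrite (gdist_sym x' x); lia).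
  assert (Hyx'ne : y <> x') by (intros <-; lia).
  destruct (gdist_step_between Hyx'ne Hyx') as (y' & Hyy' & Hy'x' & Hy'x).
  pose proof (gdist_sym x y'). pose proof (gdist_sym x' y').
  assert (Hy' : gdist y' b < gdist y' a).
  { destruct (gdist_edge y' Hab) as [Hy'a|]; [exfalso|lia].
    assert (gdist x' a < gdist x' b); [|lia].
    apply (IH (gdist x y')) with (a := a) (b := b) (x := x) (y := y'); auto; lia. }
  destruct (median_exists x y a) as [m Hm].
  destruct (median_edge Hab Hx Hy Hm) as [Hmb Hma].
  destruct (median_exists x' y' b) as [w Hw].
  assert (Hwb : is_median x y b w) by (apply median_of_square with a x' y'; auto; lia).
  rewrite <- (median_unique Hmb Hwb) in Hw.
  assert (gdist m b < gdist m a); [|lia].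
  apply (IH (gdist x' y')) with (a := b) (b := a) (x := x') (y := y'); auto; try lia.
  apply Hw.
Qed.

Lemma crosses_meets_halfspace Y a b : adj a b -> crosses adj a b Y ->
  exists w, Y w /\ gdist w b < gdist w a.
Proof.
  intros Hab (c & d & Hc & Hd & _ & Hth). apply theta_gdist in Hth.
  rewrite (gdist_sym a c), (gdist_sym b d), (gdist_sym a d), (gdist_sym b c) in Hth.
  destruct (gdist_edge c Hab), (gdist_edge d Hab); [lia| | |];
    solve [exists c; split; auto; lia | exists d; split; auto; lia].
Qed.

Lemma convex_crosses Y a b u v : convex_subcomplex adj Y -> adj a b -> Y u -> Y v ->
  gdist u a < gdist u b -> gdist v b < gdist v a -> crosses adj a b Y.
Proof.
  intros HY Hab Hu Hv. remember (gdist u v) as k eqn:Ek. revert u Hu Ek.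
  induction k as [|k IH]; intros u Hu Ek Hua Hvb.
  - symmetry in Ek. apply gdist_eq0 in Ek. subst. lia.
  - symmetry in Ek. destruct (gdist_step Ek) as [u' [Huu' Hu'v]].
    assert (Hu' : Y u') by (apply convex_between with u v; auto; rewrite (gdist_adj Huu'); lia).
    destruct (gdist_edge u' Hab) as [Hu'a|Hu'b].
    + apply IH with u'; auto; lia.
    + exists u, u'. repeat split; auto. apply theta_of_sides; lia.
Qed.

Lemma parallel_step C1 C2 x x' y : convex_subcomplex adj C2 -> parallel adj C1 C2 ->
  C1 x -> C1 x' -> adj x' x -> C2 y -> exists y', C2 y' /\ gdist x y' <= gdist x' y.
Proof.
  intros HC2 Hpar Hx Hx' Hx'x Hy.
  destruct (Nat.le_gt_cases (gdist x y) (gdist x' y)) as [Hle|Hgt]; [eauto|].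
  assert (Hcross : crosses adj x' x C2) by (apply Hpar; auto using crosses_own_edge).
  destruct (crosses_meets_halfspace Hx'x Hcross) as [w [Hw Hwx]].
  destruct (median_exists x y w) as [m (Hxy & Hyw & Hxw)].
  assert (Hm : C2 m) by (apply convex_between with y w; auto).
  assert (Hmx : gdist m x < gdist m x').
  { apply halfspace_convex with (gdist x w) x w; auto.
    rewrite gdist_refl, (gdist_adj (adj_sym Hx'x)). lia. }
  pose proof (gdist_triangle x x' y). pose proof (gdist_adj (adj_sym Hx'x)).
  pose proof (gdist_sym x y). pose proof (gdist_sym x' y).
  assert (Hmy : m <> y) by (intros ->; lia).
  assert (gdist m y <> 0) by (intros E; apply gdist_eq0 in E; contradiction).
  exists m. split; auto. lia.
Qed.

Lemma parallel_within C1 C2 : convex_subcomplex adj C1 -> convex_subcomplex adj C2 ->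
  parallel adj C1 C2 -> exists R, within R C1 C2.
Proof.
  intros HC1 HC2 Hpar. destruct (proj1 HC1) as [x0 Hx0], (proj1 HC2) as [y0 Hy0].
  exists (gdist x0 y0).
  assert (Hk : forall k x, C1 x -> gdist x x0 = k ->
            exists y, C2 y /\ gdist x y <= gdist x0 y0).
  { induction k as [|k IH]; intros x Hx Ek.
    - apply gdist_eq0 in Ek. subst. eauto.
    - destruct (gdist_step Ek) as [x' [Hxx' Hx'x0]].
      assert (Hx' : C1 x')
        by (apply convex_between with x x0; auto; rewrite (gdist_adj Hxx'); lia).
      destruct (IH x' Hx' Hx'x0) as [y [Hy Hd]].
      destruct (parallel_step HC2 Hpar Hx Hx' (adj_sym Hxx') Hy) as [y' [Hy' Hd']].
      exists y'. split; auto. lia. }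
  intros x Hx. eauto.
Qed.

Lemma parallel_cores_within Y1 Y2 C1 C2 :
  convex_subcomplex adj C1 -> convex_subcomplex adj C2 ->
  finite_hausdorff adj C1 Y1 -> finite_hausdorff adj C2 Y2 -> parallel adj C1 C2 ->
  exists R, within R Y1 Y2.
Proof.
  intros HC1 HC2 H1 H2 Hpar.
  destruct (finite_hausdorff_within H1) as [R1 [_ HY1C1]].
  destruct (finite_hausdorff_within H2) as [R2 [HC2Y2 _]].
  destruct (parallel_within HC1 HC2 Hpar) as [R HC1C2].
  exists (R1 + R + R2). eapply within_trans; [eapply within_trans|]; eauto.
Qed.

Section Action.
Variable G : Type.
Variables (mul : G -> G -> G) (inv : G -> G) (e : G) (act : G -> V -> V).
Hypothesis HG : is_group mul inv e.
Hypothesis Hact : is_graph_action mul e adj act.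

Lemma mulgA x y z : mul x (mul y z) = mul (mul x y) z.
Proof. apply HG. Qed.
Lemma mulg1 x : mul x e = x.
Proof. apply HG. Qed.
Lemma mulVg x : mul (inv x) x = e.
Proof. apply HG. Qed.
Lemma mulKVg x y : mul x (mul (inv x) y) = y.
Proof. destruct HG as (_ & H1 & _ & _ & HV). rewrite mulgA, HV, H1. reflexivity. Qed.

Lemma invg_unique x y : mul x y = e -> inv x = y.
Proof. intros Hxy. rewrite <- (mulg1 (inv x)), <- Hxy, mulgA, mulVg. apply HG. Qed.
Lemma invgK x : inv (inv x) = x.
Proof. apply invg_unique, mulVg. Qed.
Lemma invMg x y : inv (mul x y) = mul (inv y) (inv x).
Proof.
  apply invg_unique. rewrite <- mulgA, mulKVg. apply HG.
Qed.

Definition is_subgroup (H : G -> Prop) : Prop :=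
  (forall g h, H g -> H h -> H (mul g h)) /\ (forall g, H g -> H (inv g)).

Lemma finite_index_and_comm (A B K : G -> Prop) :
  finite_index mul (fun g => A g /\ B g) K -> finite_index mul (fun g => B g /\ A g) K.
Proof.
  intros [l Hl]. exists l. intros k Hk.
  destruct (Hl k Hk) as (s & h & Hs & [HA HB] & Ek). exists s, h. auto.
Qed.

Lemma finite_index_of_cover H K : is_subgroup H -> is_subgroup K ->
  (exists S, forall k, K k -> exists h s, H h /\ In s S /\ k = mul h s) ->
  finite_index mul (fun g => K g /\ H g) K.
Proof.
  intros [HM HI] [KM KI] [S HS].
  destruct (finite_choice (fun s t => K t /\ exists h, H h /\ inv t = mul h s) S) as [T HT].
  exists T. intros k Hk.
  destruct (HS (inv k) (KI _ Hk)) as (h & s & Hh & Hs & Ek).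
  destruct (HT s Hs) as (t & Ht & Kt & h' & Hh' & Et); [eauto|].
  assert (Hsk : mul s k = inv h).
  { symmetry. apply invg_unique. rewrite mulgA, <- Ek. apply mulVg. }
  exists t, (mul (inv t) k). split; [exact Ht|split; [split|]].
  - apply KM; auto.
  - rewrite Et, <- mulgA, Hsk. auto.
  - symmetry. apply mulKVg.
Qed.

Lemma act1 v : act e v = v.
Proof. apply Hact. Qed.
Lemma actM g h v : act (mul g h) v = act g (act h v).
Proof. apply Hact. Qed.
Lemma act_adj g x y : adj x y -> adj (act g x) (act g y).
Proof. apply Hact. Qed.
Lemma actK g v : act (inv g) (act g v) = v.
Proof. rewrite <- actM, mulVg. apply act1. Qed.

Lemma walk_act g x y n : Walk adj x y n -> Walk adj (act g x) (act g y) n.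
Proof. induction 1; econstructor; eauto using act_adj. Qed.

Lemma gdist_act g x y : gdist (act g x) (act g y) = gdist x y.
Proof.
  apply Nat.le_antisymm; apply gdist_le_walk.
  - apply walk_act, gdist_spec.
  - rewrite <- (actK g x), <- (actK g y) at 1. apply walk_act, gdist_spec.
Qed.

Lemma stab_subgroup Y : is_subgroup (stab act Y).
Proof.
  split.
  - intros g h Hg Hh v. rewrite actM. rewrite (Hh v). apply Hg.
  - intros g Hg v. rewrite (Hg (act (inv g) v)), <- actM.
    destruct HG as (_ & _ & _ & _ & HV). rewrite HV, act1. reflexivity.
Qed.

Lemma transporter_finite : acts_properly act ->
  forall p q, exists l, forall g, act g p = q -> In g l.
Proof.
  intros Hprop p q. destruct (classic (exists g0, act g0 p = q)) as [[g0 Hg0]|Hnone].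
  - destruct (Hprop p) as [l Hl]. exists (map (mul g0) l). intros g Hg.
    rewrite <- (mulKVg g0 g). apply in_map, Hl. rewrite actM, Hg, <- Hg0. apply actK.
  - exists nil. intros g Hg. exfalso. eauto.
Qed.

Lemma near_orbit_cover H Y p R : locally_finite adj -> acts_properly act ->
  acts_cocompactly_on act H Y ->
  exists S, forall g, (exists y, Y y /\ gdist (act g p) y <= R) ->
    exists h s, H h /\ In s S /\ g = mul h s.
Proof.
  intros Hlf Hprop [F HF].
  destruct (finite_union (P := fun f v => gdist f v <= R) (fun f => ball_finite Hlf f R) F)
    as [B HB].
  destruct (finite_union (P := fun q g => act g p = q) (transporter_finite Hprop p) B)
    as [S HS].
  exists S. intros g (y & Hy & Hgy).
  destruct (HF y Hy) as (f & h & Hf & Hh & ->).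
  exists h, (mul (inv h) g). repeat split; auto.
  - apply HS with (act (mul (inv h) g) p); auto. apply HB with f; auto.
    rewrite actM, <- (actK h f) at 1. rewrite gdist_act, gdist_sym. exact Hgy.
  - symmetry. apply mulKVg.
Qed.

Lemma within_finite_index Y1 Y2 R : locally_finite adj -> acts_properly act ->
  acts_cocompactly_on act (stab act Y2) Y2 -> (exists p, Y1 p) -> within R Y1 Y2 ->
  finite_index mul (fun g => stab act Y1 g /\ stab act Y2 g) (stab act Y1).
Proof.
  intros Hlf Hprop Hcoc [p Hp] Hwithin.
  apply finite_index_of_cover; try apply stab_subgroup.
  destruct (near_orbit_cover p R Hlf Hprop Hcoc) as [S HS]. exists S.
  intros g Hg. apply HS, Hwithin, (Hg p), Hp.
Qed.

Lemma finite_index_orbits_close H K : is_subgroup H -> is_subgroup K ->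
  finite_index mul (fun g => K g /\ H g) K ->
  forall x y, exists M, forall g, K g -> exists h, H h /\ gdist (act h x) (act g y) <= M.
Proof.
  intros [_ HI] [_ KI] [l Hl] x y.
  destruct (finite_max_bound (fun s => gdist x (act (inv s) y)) l) as [M HM].
  exists M. intros g Hg.
  destruct (Hl (inv g) (KI _ Hg)) as (s & k & Hs & [_ Hk] & Eg).
  exists (inv k). split; auto.
  assert (E : g = mul (inv k) (inv s)) by (rewrite <- invMg, <- Eg, invgK; reflexivity).
  rewrite E, actM, gdist_act. apply HM, Hs.
Qed.

Lemma deep_points_transfer H K a b x y : is_subgroup H -> is_subgroup K ->
  finite_index mul (fun g => K g /\ H g) K -> adj a b ->
  (forall N, exists g, K g /\ far_from adj a b N (act g y)) ->
  forall n, exists h, H h /\ halfspace adj a b (act h x) /\ far_from adj a b n (act h x).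
Proof.
  intros HH HK Hfi Hab Hdeep n.
  destruct (finite_index_orbits_close HH HK Hfi x y) as [M HM].
  destruct (Hdeep (S n + M)) as [g [Hg Hfar]].
  destruct (HM g Hg) as [h [Hh Hd]].
  assert (Hfar' : far_from adj a b (S n) (act h x)) by (eapply far_from_shift; eauto).
  exists h. split; [|split]; auto.
  - eapply far_from_halfspace; eauto.
  - revert Hfar'. rewrite !far_from_gdist. intros Hfar' z Hz. specialize (Hfar' z Hz). lia.
Qed.

Lemma essential_transfer H K Y Z a b : is_subgroup H -> is_subgroup K ->
  finite_index mul (fun g => K g /\ H g) K -> adj a b -> (exists y, Y y) ->
  essential adj act K Y a b -> essential adj act H Z a b.
Proof.
  intros HH HK Hfi Hab [y Hy] Hess x _ n. split.
  - apply deep_points_transfer with (K := K) (y := y); auto.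
    intros N. destruct (proj1 (Hess y Hy N)) as (g & Hg & _ & Hfar). eauto.
  - apply deep_points_transfer with (K := K) (y := y); auto.
    intros N. destruct (proj2 (Hess y Hy N)) as (g & Hg & _ & Hfar). eauto.
Qed.

Lemma essential_crosses H Y a b : convex_subcomplex adj Y -> invariant act H Y -> adj a b ->
  essential adj act H Y a b -> crosses adj a b Y.
Proof.
  intros HY Hinv Hab Hess. destruct (proj1 HY) as [x Hx].
  destruct (proj1 (Hess x Hx 0)) as (g & Hg & Hga & _).
  destruct (proj2 (Hess x Hx 0)) as (h & Hh & Hhb & _).
  apply halfspace_gdist in Hga, Hhb.
  apply convex_crosses with (act g x) (act h x); auto.
Qed.

Lemma finite_index_core_crosses Y1 Y2 C1 C2 a b :
  convex_subcomplex adj Y1 -> convex_subcomplex adj Y2 ->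
  essential_core adj act (stab act Y1) Y1 C1 -> essential_core adj act (stab act Y2) Y2 C2 ->
  finite_index mul (fun g => stab act Y1 g /\ stab act Y2 g) (stab act Y1) ->
  adj a b -> crosses adj a b C1 -> crosses adj a b C2.
Proof.
  intros HY1 HY2 (_ & _ & _ & _ & Hcross1 & _) (_ & _ & _ & _ & Hcross2 & _) Hfi Hab Hc1.
  apply (Hcross1 a b Hab) in Hc1 as [_ Hess1].
  assert (Hess2 : essential adj act (stab act Y2) Y2 a b).
  { apply essential_transfer with (stab act Y1) Y1; auto using stab_subgroup. apply HY1. }
  apply (Hcross2 a b Hab). split; auto.
  apply essential_crosses with (stab act Y2); auto.
  intros g v Hg. apply Hg.
Qed.
End Action.
End Median.
End Geometry.


Theorem mainTheorem6
  (V : Type) (adj : V -> V -> Prop)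
  (G : Type) (mul : G -> G -> G) (inv : G -> G) (e : G) (act : G -> V -> V)
  (HX : proper_CAT0_cube_complex adj)
  (HG : is_group mul inv e)
  (Hact : is_graph_action mul e adj act)
  (Hprop : acts_properly act)
  (Hcoc : acts_cocompactly_on act (fun _ => True) (fun _ => True))
  (Y1 Y2 : V -> Prop)
  (HY1 : convex_subcomplex adj Y1) (HY2 : convex_subcomplex adj Y2)
  (HC1 : acts_cocompactly_on act (stab act Y1) Y1)
  (HC2 : acts_cocompactly_on act (stab act Y2) Y2)
  (C1 C2 : V -> Prop)
  (Hcore1 : essential_core adj act (stab act Y1) Y1 C1)
  (Hcore2 : essential_core adj act (stab act Y2) Y2 C2) :
  commensurable mul (stab act Y1) (stab act Y2) <-> parallel adj C1 C2.
Proof.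
  destruct HX as [(Hsym & Hirr & Hconn & Hmed) Hlf]. split.
  - intros [Hfi1 Hfi2] a b Hab. split.
    + exact (finite_index_core_crosses Hsym Hirr Hconn Hmed HG Hact
               HY1 HY2 Hcore1 Hcore2 Hfi1 Hab).
    + exact (finite_index_core_crosses Hsym Hirr Hconn Hmed HG Hact
               HY2 HY1 Hcore2 Hcore1 (finite_index_and_comm Hfi2) Hab).
  - intros Hpar.
    destruct Hcore1 as (HC1conv & _ & _ & HC1Y1 & _), Hcore2 as (HC2conv & _ & _ & HC2Y2 & _).
    destruct (parallel_cores_within Hsym Hirr Hconn Hmed HC1conv HC2conv HC1Y1 HC2Y2 Hpar)
      as [R HR].
    destruct (parallel_cores_within Hsym Hirr Hconn Hmed HC2conv HC1conv HC2Y2 HC1Y1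
                (parallel_sym Hpar)) as [R' HR'].
    split.
    + exact (within_finite_index Hsym Hirr Hconn HG Hact Hlf Hprop HC2 (proj1 HY1) HR).
    + apply finite_index_and_comm.
      exact (within_finite_index Hsym Hirr Hconn HG Hact Hlf Hprop HC1 (proj1 HY2) HR').
Qed.
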